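(* Let $n,k$ be positive integers, let $T:M_n(\mathbb{C})\to M_n(\mathbb{C})$ be a UCPT$(n)$-Schur multiplier and $S:M_k(\mathbb{C})\to M_k(\mathbb{C})$ a UCPT$(k)$-Schur multiplier. Then $T\otimes S\in\mathrm{conv}(\mathrm{Aut}(M_n(\mathbb{C})\otimes M_k(\mathbb{C})))$ if and only if $T\in\mathrm{conv}(\mathrm{Aut}(M_n(\mathbb{C})))$ and $S\in\mathrm{conv}(\mathrm{Aut}(M_k(\mathbb{C})))$.
   Context: A UCPT$(n)$-map is a unital completely positive trace-preserving linear map on $M_n(\mathbb{C})$. A UCPT$(n)$-Schur multiplier is a UCPT$(n)$-map of the form $x=(x_{ij})\mapsto (b_{ij}x_{ij})$ for some fixed matrix $(b_{ij})\in M_n(\mathbb{C})$. $\mathrm{Aut}(M_m(\mathbb{C}))$ is the set of maps $x\mapsto u^*xu$ with $u$ unitary, $\mathrm{conv}$ denotes convex hull, and $M_n(\mathbb{C})\otimes M_k(\mathbb{C})$ is identified with $M_{nk}(\mathbb{C})$. *)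

From HB Require Import structures.
From mathcomp Require Import all_boot all_order all_algebra.
From mathcomp Require Import complex mxtens.
From mathcomp Require Import reals.

Set Implicit Arguments.
Unset Strict Implicit.
Unset Printing Implicit Defensive.

Import Order.TTheory GRing.Theory Num.Theory.
Local Open Scope ring_scope.

Section Defs.
Variable C : numClosedFieldType.

Definition adjmx m n (A : 'M[C]_(m, n)) : 'M[C]_(n, m) :=
  \matrix_(i, j) Num.conj (A j i).

(* positive semidefinite: x^* A x >= 0 for all vectors x
   (in the partial order of C this means real and nonnegative) *)
Definition psd n (A : 'M[C]_n) : Prop :=
  forall x : 'cV[C]_n, 0 <= (adjmx x *m A *m x) 0 0.

(* M_m(M_n) identified with M_(m*n) via mxtens_index (consistent with tensmx):
   block (a,b) of X *)
Definition blk m n (X : 'M[C]_(m * n)) (a b : 'I_m) : 'M[C]_n :=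
  \matrix_(i, j) X (mxtens_index (a, i)) (mxtens_index (b, j)).

(* amplification id_{M_m} (x) Phi acting on M_m(M_n) = M_(m*n) *)
Definition ampl m n (Phi : 'M[C]_n -> 'M[C]_n) (X : 'M[C]_(m * n)) : 'M[C]_(m * n) :=
  \matrix_(r, s) Phi (blk X (mxtens_unindex r).1 (mxtens_unindex s).1)
                     (mxtens_unindex r).2 (mxtens_unindex s).2.

Definition is_linear_map n (Phi : 'M[C]_n -> 'M[C]_n) : Prop :=
  forall (a : C) (x y : 'M[C]_n), Phi (a *: x + y) = a *: Phi x + Phi y.

Definition completely_positive n (Phi : 'M[C]_n -> 'M[C]_n) : Prop :=
  forall (m : nat) (X : 'M[C]_(m * n)), psd X -> psd (ampl Phi X).

Definition UCPT n (Phi : 'M[C]_n -> 'M[C]_n) : Prop :=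
  [/\ is_linear_map Phi,
      Phi 1%:M = 1%:M,
      (forall x, \tr (Phi x) = \tr x) &
      completely_positive Phi].

Definition schur_mult n (b : 'M[C]_n) (x : 'M[C]_n) : 'M[C]_n :=
  \matrix_(i, j) (b i j * x i j).

Definition UCPT_schur n (Phi : 'M[C]_n -> 'M[C]_n) : Prop :=
  UCPT Phi /\ exists b : 'M[C]_n, forall x, Phi x = schur_mult b x.

Definition unitary n (u : 'M[C]_n) : Prop := adjmx u *m u = 1%:M.

Definition in_conv_Aut n (Phi : 'M[C]_n -> 'M[C]_n) : Prop :=
  exists (N : nat) (lam : 'I_N -> C) (u : 'I_N -> 'M[C]_n),
    [/\ forall l, 0 <= lam l,
        \sum_(l < N) lam l = 1,
        forall l, unitary (u l) &
        forall x, Phi x = \sum_(l < N) lam l *: (adjmx (u l) *m x *m u l)].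

(* tensor product T (x) S of linear maps, acting on M_n (x) M_k = M_(n*k):
   the linear extension of x (x) y |-> T x (x) S y *)
Definition tens_map n k (T : 'M[C]_n -> 'M[C]_n) (S : 'M[C]_k -> 'M[C]_k)
  (X : 'M[C]_(n * k)) : 'M[C]_(n * k) :=
  \sum_(i < n) \sum_(j < n) \sum_(p < k) \sum_(q < k)
     X (mxtens_index (i, p)) (mxtens_index (j, q)) *:
       (T (delta_mx i j) *t S (delta_mx p q)).

End Defs.

From HB Require Import structures.
From mathcomp Require Import all_boot all_order all_algebra.
From mathcomp Require Import complex mxtens.
From mathcomp Require Import reals ring.
Set Implicit Arguments.
Unset Strict Implicit.
Unset Printing Implicit Defensive.
Import Order.TTheory GRing.Theory Num.Theory.
Local Open Scope ring_scope.

(* A Schur multiplier with symbol b lies in conv(Aut(M_n)) exactly when b is a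
   convex combination of the matrices (conj (v i) * v j)_ij with |v i| = 1,
   i.e. when it is a convex combination of conjugations by diagonal unitaries.
   Indeed the symbol of x |-> sum_l lam_l u_l^* x u_l has entries
   sum_l lam_l conj (u_l i i) u_l j j, and as |u_l i i| <= 1 while unitality
   forces b i i = 1, these diagonal entries are unimodular whenever lam_l > 0.
   The symbol of T (x) S is b (x) c; such convex combinations are stable under
   (x), and fixing one index of the second (first) factor in a combination for
   b (x) c yields one for b (for c), the other symbol having unit diagonal. *)

Lemma convex_comb_eq_max (R : numDomainType) N (lam t : 'I_N -> R) :
  (forall l, 0 <= lam l) -> \sum_(l < N) lam l = 1 -> (forall l, t l <= 1) ->
  \sum_(l < N) lam l * t l = 1 -> forall l, lam l != 0 -> t l = 1.
Proof.
move=> lam_ge0 lam_sum1 t_le1 comb1 l lam_neq0.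
have gap0 : \sum_(l < N) lam l * (1 - t l) = 0.
  under eq_bigr do rewrite mulrBr mulr1.
  by rewrite sumrB lam_sum1 comb1 subrr.
have /psumr_eq0P/(_ gap0 l isT)/eqP : forall l, true -> 0 <= lam l * (1 - t l).
  by move=> l' _; rewrite mulr_ge0 ?subr_ge0.
by rewrite mulf_eq0 (negbTE lam_neq0) subr_eq0 => /eqP <-.
Qed.

Section SchurMultipliers.
Variable C : numClosedFieldType.

Definition conv_unimodular_gram n (b : 'M[C]_n) : Prop :=
  exists N (lam : 'I_N -> C) (v : 'I_N -> 'I_n -> C),
  [/\ forall l, 0 <= lam l, \sum_(l < N) lam l = 1,
      forall l i, Num.conj (v l i) * v l i = 1 &
      forall i j, b i j = \sum_(l < N) lam l * (Num.conj (v l i) * v l j)].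

Lemma unital_schur_mult_diag n (b : 'M[C]_n) (Phi : 'M[C]_n -> 'M[C]_n) :
  (forall x, Phi x = schur_mult b x) -> Phi 1%:M = 1%:M -> forall i, b i i = 1.
Proof.
move=> Phi_b /matrixP Phi1 i; have := Phi1 i i.
by rewrite Phi_b !mxE eqxx mulr1n mulr1.
Qed.

Lemma mulmx_delta_mxE m n p q (A : 'M[C]_(m, n)) (B : 'M[C]_(p, q)) i j r s :
  (A *m delta_mx i j *m B) r s = A r i * B j s.
Proof.
have col_delta t : (A *m delta_mx i j) r t = A r i * (t == j)%:R.
  rewrite mxE (big_only1 i) // => [|u u_neq_i _]; first by rewrite mxE eqxx.
  by rewrite mxE (negbTE u_neq_i) mulr0.
rewrite mxE (big_only1 j) // => [|t t_neq_j _]; first by rewrite col_delta eqxx mulr1.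
by rewrite col_delta (negbTE t_neq_j) mulr0 mul0r.
Qed.

Lemma adjmx_diag_mx n (d : 'rV[C]_n) : adjmx (diag_mx d) = diag_mx (map_mx Num.conj d).
Proof.
apply/matrixP => i j; rewrite !mxE eq_sym.
by case: eqVneq => [->|_]; rewrite ?conjC0.
Qed.

Lemma conj_diag_mxE n (d : 'rV[C]_n) x i j :
  (adjmx (diag_mx d) *m x *m diag_mx d) i j = Num.conj (d 0 i) * x i j * d 0 j.
Proof. by rewrite adjmx_diag_mx mul_mx_diag mul_diag_mx !mxE. Qed.

Lemma unitary_diag_mx n (d : 'rV[C]_n) :
  (forall i, Num.conj (d 0 i) * d 0 i = 1) -> unitary (diag_mx d).
Proof.
move=> d_unimodular; apply/matrixP => i j.
rewrite -[adjmx _]mulmx1 conj_diag_mxE !mxE.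
by case: eqVneq => [->|_]; rewrite ?mulr1 ?d_unimodular // mulr0 mul0r.
Qed.

Lemma unitary_diag_le1 n (u : 'M[C]_n) i :
  unitary u -> Num.conj (u i i) * u i i <= 1.
Proof.
move=> /matrixP/(_ i i); rewrite !mxE eqxx mulr1n => col_norm1.
rewrite -col_norm1 (bigD1 i) //= mxE lerDl.
by apply: sumr_ge0 => r _; rewrite mxE mulrC mul_conjC_ge0.
Qed.

Lemma conv_unimodular_gram_conv_Aut n (b : 'M[C]_n) (Phi : 'M[C]_n -> 'M[C]_n) :
  (forall x, Phi x = schur_mult b x) -> conv_unimodular_gram b -> in_conv_Aut Phi.
Proof.
move=> Phi_b [N [lam [v [lam_ge0 lam_sum1 v_unimodular b_comb]]]].
exists N, lam, (fun l => diag_mx (\row_i v l i)); split => //.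
  by move=> l; apply: unitary_diag_mx => i; rewrite mxE v_unimodular.
move=> x; apply/matrixP => i j; rewrite Phi_b summxE !mxE b_comb mulr_suml.
by apply: eq_bigr => l _; rewrite mxE conj_diag_mxE !mxE; ring.
Qed.

Lemma conv_Aut_conv_unimodular_gram n (b : 'M[C]_n) (Phi : 'M[C]_n -> 'M[C]_n) :
  (forall i, b i i = 1) -> (forall x, Phi x = schur_mult b x) ->
  in_conv_Aut Phi -> conv_unimodular_gram b.
Proof.
move=> b_diag1 Phi_b [N [lam [u [lam_ge0 lam_sum1 u_unitary Phi_comb]]]].
have b_comb i j : b i j = \sum_(l < N) lam l * (Num.conj (u l i i) * u l j j).
  have /matrixP/(_ i j) := Phi_comb (delta_mx i j).
  rewrite Phi_b summxE !mxE !eqxx mulr1 => ->.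
  by apply: eq_bigr => l _; rewrite mxE mulmx_delta_mxE !mxE.
have u_unimodular l i : lam l != 0 -> Num.conj (u l i i) * u l i i = 1.
  apply: (convex_comb_eq_max (t := fun l => Num.conj (u l i i) * u l i i)) => //.
    by move=> l'; apply: unitary_diag_le1.
  by rewrite -b_comb b_diag1.
exists N, lam, (fun l i => if lam l == 0 then 1 else u l i i); split => //.
  by move=> l i; case: ifPn => [_|]; [rewrite conjC1 mulr1 | exact: u_unimodular].
move=> i j; rewrite b_comb; apply: eq_bigr => l _.
by case: ifPn => [/eqP->|_]; rewrite ?mul0r.
Qed.

Lemma schur_conv_AutP n (b : 'M[C]_n) (Phi : 'M[C]_n -> 'M[C]_n) :
  (forall i, b i i = 1) -> (forall x, Phi x = schur_mult b x) ->
  in_conv_Aut Phi <-> conv_unimodular_gram b.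
Proof.
move=> b_diag1 Phi_b; split.
  exact: conv_Aut_conv_unimodular_gram.
exact: conv_unimodular_gram_conv_Aut.
Qed.

Lemma eq_tens_map n k (T T' : 'M[C]_n -> 'M[C]_n) (S S' : 'M[C]_k -> 'M[C]_k) X :
  (forall x, T x = T' x) -> (forall y, S y = S' y) ->
  tens_map T S X = tens_map T' S' X.
Proof.
move=> TT' SS'; apply: eq_bigr => i _; apply: eq_bigr => j _.
by apply: eq_bigr => p _; apply: eq_bigr => q _; rewrite TT' SS'.
Qed.

Lemma tens_map_schur_mult n k (b : 'M[C]_n) (c : 'M[C]_k) X :
  tens_map (schur_mult b) (schur_mult c) X = schur_mult (b *t c) X.
Proof.
apply/matrixP => r s; case: (mxtens_indexP r) => i0 p0; case: (mxtens_indexP s) => j0 q0.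
rewrite [RHS]mxE tensmxE.
have termE i j p q :
  (X (mxtens_index (i, p)) (mxtens_index (j, q)) *:
     (schur_mult b (delta_mx i j) *t schur_mult c (delta_mx p q)))
    (mxtens_index (i0, p0)) (mxtens_index (j0, q0)) =
  b i0 j0 * c p0 q0 * X (mxtens_index (i, p)) (mxtens_index (j, q)) *+
    [&& i == i0, j == j0, p == p0 & q == q0].
  rewrite mxE tensmxE !mxE !(eq_sym i0) !(eq_sym j0) !(eq_sym p0) !(eq_sym q0).
  by do 4!case: eqP => _; rewrite /= ?(mulr0, mul0r, mulr1, mulr0n, mulr1n) //; ring.
rewrite summxE (big_only1 i0) // => [|i ne _]; last first.
  by rewrite summxE; apply: big1 => j _; rewrite summxE; apply: big1 => p _;
     rewrite summxE; apply: big1 => q _; rewrite termE (negbTE ne).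
rewrite summxE (big_only1 j0) // => [|j ne _]; last first.
  by rewrite summxE; apply: big1 => p _; rewrite summxE; apply: big1 => q _;
     rewrite termE eqxx (negbTE ne).
rewrite summxE (big_only1 p0) // => [|p ne _]; last first.
  by rewrite summxE; apply: big1 => q _; rewrite termE !eqxx (negbTE ne).
rewrite summxE (big_only1 q0) // => [|q ne _]; last by rewrite termE !eqxx (negbTE ne).
by rewrite termE !eqxx.
Qed.

Lemma conv_unimodular_gram_tens n k (b : 'M[C]_n) (c : 'M[C]_k) :
  conv_unimodular_gram b -> conv_unimodular_gram c -> conv_unimodular_gram (b *t c).
Proof.
case=> [N1 [lam [v [lam_ge0 lam_sum1 v_unimodular b_comb]]]].
case=> [N2 [mu [w [mu_ge0 mu_sum1 w_unimodular c_comb]]]].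
exists (N1 * N2)%N, (fun l => lam (mxtens_unindex l).1 * mu (mxtens_unindex l).2),
  (fun l r => v (mxtens_unindex l).1 (mxtens_unindex r).1 *
              w (mxtens_unindex l).2 (mxtens_unindex r).2); split.
- by move=> l; rewrite mulr_ge0.
- by rewrite -mulr_sum lam_sum1 mu_sum1 mulr1.
- by move=> l r; rewrite rmorphM /= mulrACA v_unimodular w_unimodular mulr1.
move=> r s; case: (mxtens_indexP r) => i p; case: (mxtens_indexP s) => j q.
rewrite tensmxE b_comb c_comb mulr_sum; apply: eq_bigr => l _.
by rewrite !mxtens_indexK /= rmorphM /=; ring.
Qed.

Lemma conv_unimodular_gram_tens_factorl n k (b : 'M[C]_n) (c : 'M[C]_k) :
  (0 < k)%N -> (forall p, c p p = 1) ->
  conv_unimodular_gram (b *t c) -> conv_unimodular_gram b.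
Proof.
move=> k_gt0 c_diag1 [N [lam [w [lam_ge0 lam_sum1 w_unimodular bc_comb]]]].
pose p0 : 'I_k := Ordinal k_gt0.
exists N, lam, (fun l i => w l (mxtens_index (i, p0))); split => // i j.
by rewrite -bc_comb tensmxE c_diag1 mulr1.
Qed.

Lemma conv_unimodular_gram_tens_factorr n k (b : 'M[C]_n) (c : 'M[C]_k) :
  (0 < n)%N -> (forall i, b i i = 1) ->
  conv_unimodular_gram (b *t c) -> conv_unimodular_gram c.
Proof.
move=> n_gt0 b_diag1 [N [lam [w [lam_ge0 lam_sum1 w_unimodular bc_comb]]]].
pose i0 : 'I_n := Ordinal n_gt0.
exists N, lam, (fun l p => w l (mxtens_index (i0, p))); split => // p q.
by rewrite -bc_comb tensmxE b_diag1 mul1r.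
Qed.

End SchurMultipliers.

Theorem theorem2p2 (R : realType) (n k : nat) (hn : (0 < n)%N) (hk : (0 < k)%N)
  (T : 'M[R[i]]_n -> 'M[R[i]]_n) (S : 'M[R[i]]_k -> 'M[R[i]]_k) :
  UCPT_schur T -> UCPT_schur S ->
  (in_conv_Aut (tens_map T S) <-> (in_conv_Aut T /\ in_conv_Aut S)).
Proof.
case=> [[_ T1 _ _] [b Tb]] [[_ S1 _ _] [c Sc]].
have b_diag1 := unital_schur_mult_diag Tb T1.
have c_diag1 := unital_schur_mult_diag Sc S1.
have bc_diag1 r : (b *t c) r r = 1.
  by case: (mxtens_indexP r) => i p; rewrite tensmxE b_diag1 c_diag1 mulr1.
have TS_bc X : tens_map T S X = schur_mult (b *t c) X.
  by rewrite (eq_tens_map _ Tb Sc) tens_map_schur_mult.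
rewrite (schur_conv_AutP bc_diag1 TS_bc).
rewrite (schur_conv_AutP b_diag1 Tb) (schur_conv_AutP c_diag1 Sc).
split => [bc_conv | [b_conv c_conv]]; last exact: conv_unimodular_gram_tens.
split; first exact: conv_unimodular_gram_tens_factorl bc_conv.
exact: conv_unimodular_gram_tens_factorr bc_conv.
Qed.
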